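(* Let $r$ be a prime power, $q=r^2$, and let $0\le k\le n\le q$ be integers. Then for every integer $i$ with $0\le i\le n-k$ there exists a Hermitian self-orthogonal matrix-product code over $\mathbb{F}_q$ with parameters $[2n,n-i,d]_q$ where $d\ge\min\{2(n-k+1),k+i+1\}$.
   Context: For $a\in\mathbb{F}_q$, $\overline{a}:=a^r$. The Hermitian inner product on $\mathbb{F}_q^n$ is $\langle u,v\rangle_H=\sum_i u_i\overline{v_i}$; a linear code $C$ is Hermitian self-orthogonal if $C\subseteq C^{\perp_H}$. A code with parameters $[n,k,d]_q$ has length $n$, dimension $k$, minimum Hamming weight $d$. If $C_1,\dots,C_s$ are linear codes of length $m$ with generator matrices $G_i$ and $A=[a_{ij}]\in M_{s,l}(\mathbb{F}_q)$, the matrix-product code $[C_1,\dots,C_s]\cdot A$ is the linear code of length $ml$ generated by the block matrix whose $(i,j)$ block is $a_{ij}G_i$. *)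

From HB Require Import structures.
From mathcomp Require Import all_boot all_order all_algebra all_fingroup all_field.
Set Implicit Arguments. Unset Strict Implicit. Unset Printing Implicit Defensive.
Import GRing.Theory.
Local Open Scope ring_scope.

(* A linear code of length n over F is represented by a generator matrix
   G : 'M[F]_(k, n); its codewords are the row vectors in the row space of G. *)
Definition in_code {F : fieldType} {k n : nat} (G : 'M[F]_(k, n)) (u : 'rV[F]_n) : bool :=
  (u <= G)%MS.

Definition code_dim {F : fieldType} {k n : nat} (G : 'M[F]_(k, n)) : nat := \rank G.

Definition wt {F : fieldType} {n : nat} (u : 'rV[F]_n) : nat := #|[set j | u 0 j != 0]|.

Definition min_dist_ge {F : fieldType} {k n : nat} (G : 'M[F]_(k, n)) (d : nat) : Prop :=
  forall u : 'rV[F]_n, in_code G u -> u != 0 -> (d <= wt u)%N.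

(* Hermitian inner product <u,v>_H = sum_i u_i * v_i^r  (conjugation a |-> a^r) *)
Definition herm_ip {F : fieldType} (r : nat) {n : nat} (u v : 'rV[F]_n) : F :=
  \sum_(j < n) u 0 j * (v 0 j) ^+ r.

Definition herm_self_orth {F : fieldType} (r : nat) {k n : nat} (G : 'M[F]_(k, n)) : Prop :=
  forall u v : 'rV[F]_n, in_code G u -> in_code G v -> herm_ip r u v = 0.

(* Generator matrix of the matrix-product code [C_1,...,C_s] . A, where C_i has
   generator matrix G i : 'M_(kk i, m) and A : 'M_(s, l): the block matrix whose
   (i,j) block is a_ij G_i. *)
Definition mp_gen {F : fieldType} {s l m : nat} (kk : 'I_s -> nat)
  (G : forall i : 'I_s, 'M[F]_(kk i, m)) (A : 'M[F]_(s, l)) :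
  'M[F]_(\sum_(i < s) kk i, \sum_(j < l) m) :=
  \mxblock_(i < s, j < l) (A i j *: G i).

From HB Require Import structures.
From mathcomp Require Import all_boot all_order all_algebra all_fingroup all_field.
From mathcomp Require Import all_solvable.
From mathcomp Require Import ring zify.
Set Implicit Arguments. Unset Strict Implicit. Unset Printing Implicit Defensive.
Import GRing.Theory.
Local Open Scope ring_scope.

(* The code is [C1, C2] . A with A = [[1, l], [1, l']], where C1 = RS_k(a) is the
   Reed-Solomon code on n distinct points a_j of F, C2 is the Euclidean dual of
   RS_(k+i)(a^r), and l != l' both have norm l^(r+1) = -1; such l, l' exist because F^*
   is cyclic of order (r-1)(r+1). Conjugation maps RS_k(a) into RS_k(a^r), so C1 is
   Hermitian-orthogonal to C2. Hence in the Hermitian product of two codewords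
   (x + y, l x + l' y) and (x' + y', l x' + l' y') the cross terms vanish and the norm
   condition cancels <x, x'> and <y, y'>. Since A is invertible the dimension is
   k + (n - k - i). A nonzero codeword has weight 2 wt x >= 2 (n - k + 1) if y = 0, and
   otherwise at least wt y >= k + i + 1, because x_j + y_j and l x_j + l' y_j cannot
   both vanish when y_j != 0. *)

Section HammingWeight.
Variable F : fieldType.

Lemma wtE n (u : 'rV[F]_n) : wt u = (\sum_j (u 0%R j != 0%R))%N.
Proof.
rewrite /wt -sum1_card big_mkcond /=; apply: eq_bigr => j _.
by rewrite inE; case: (u 0 j != 0).
Qed.

Lemma wt_eq0 n (u : 'rV[F]_n) : (wt u == 0%N) = (u == 0).
Proof.
rewrite /wt cards_eq0; apply/eqP/eqP => [/setP u0 | ->].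
  by apply/rowP => j; have := u0 j; rewrite !inE mxE => /negbFE/eqP.
by apply/setP => j; rewrite !inE mxE eqxx.
Qed.

Lemma wt_row_mx n1 n2 (u : 'rV[F]_n1) (v : 'rV[F]_n2) :
  wt (row_mx u v) = (wt u + wt v)%N.
Proof.
rewrite !wtE big_split_ord /=; congr (_ + _)%N; apply: eq_bigr => j _.
  by rewrite row_mxEl.
by rewrite row_mxEr.
Qed.

Lemma wtZ n c (u : 'rV[F]_n) : c != 0 -> wt (c *: u) = wt u.
Proof.
by move=> c0; rewrite !wtE; apply: eq_bigr => j _; rewrite mxE mulf_eq0 (negPf c0).
Qed.

Lemma wt_le_mix n (l l' : F) (x y : 'rV[F]_n) : l != l' ->
  (wt y <= wt (x + y) + wt (l *: x + l' *: y))%N.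
Proof.
move=> ll'; rewrite !wtE -big_split /=; apply: leq_sum => j _; rewrite !mxE.
have [-> | y0] := eqVneq (y 0 j) 0; first by [].
have [xy0 | _] := eqVneq (x 0 j + y 0 j) 0; last by [].
have -> : x 0 j = - y 0 j by apply/eqP; rewrite -addr_eq0 xy0.
rewrite mulrN -mulNr -mulrDl mulf_eq0 (negPf y0) orbF.
by rewrite addrC subr_eq0 eq_sym (negPf ll').
Qed.

End HammingWeight.

Section ReedSolomon.
Variables (F : fieldType) (n : nat) (a : 'I_n -> F).
Hypothesis a_inj : injective a.

Lemma size_rVpoly t (c : 'rV[F]_t) : (size (rVpoly c) <= t)%N.
Proof. exact: size_poly. Qed.

Lemma mul_Vandermonde t (c : 'rV[F]_t) :
  c *m Vandermonde t (\row_j a j) = \row_j (rVpoly c).[a j].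
Proof.
apply/rowP => j; rewrite !mxE (@horner_coef_wide _ t) ?size_poly //.
by apply: eq_bigr => m _; rewrite !mxE coef_rVpoly_ord.
Qed.

Lemma card_roots_lt (P : {poly F}) :
  P != 0 -> (#|[set j | root P (a j)]| < size P)%N.
Proof.
move=> P0; rewrite cardE -(size_map a).
apply: max_poly_roots P0 _ _; last by rewrite map_inj_uniq ?enum_uniq.
by apply/allP => x /mapP[j]; rewrite mem_enum inE => Pj ->.
Qed.

Lemma wt_horner_ge (P : {poly F}) :
  P != 0 -> (n.+1 - size P <= wt (\row_j P.[a j]))%N.
Proof.
move=> P0; have := card_roots_lt P0.
have : (#|[set j | root P (a j)]| + wt (\row_j P.[a j]))%N = n.
  rewrite -[RHS](card_ord n) -(cardsC [set j | root P (a j)]); congr (_ + _)%N.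
  by apply: eq_card => j; rewrite !inE mxE rootE.
lia.
Qed.

Lemma row_free_Vandermonde t : (t <= n)%N -> row_free (Vandermonde t (\row_j a j)).
Proof.
move=> tn; apply/inj_row_free => c; rewrite mul_Vandermonde => ev0.
suff P0 : rVpoly c = 0 by rewrite -[c]rVpolyK P0 linear0.
apply/eqP; apply: contraT => P0; have := wt_horner_ge P0.
have /eqP wt0 : wt (0 : 'rV[F]_n) == 0%N by rewrite wt_eq0.
by rewrite ev0 wt0 leqn0 subn_eq0 ltnNge (leq_trans (size_rVpoly c) tn).
Qed.

Lemma min_dist_Vandermonde t : min_dist_ge (Vandermonde t (\row_j a j)) (n.+1 - t).
Proof.
move=> _ /submxP[c ->]; rewrite mul_Vandermonde => ev0.
have P0 : rVpoly c != 0 by apply: contra_neq ev0 => ->; apply/rowP => j; rewrite !mxE horner0.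
by apply: leq_trans (wt_horner_ge P0); rewrite leq_sub2l ?size_rVpoly.
Qed.

Lemma dual_Vandermonde_horner t (y : 'rV[F]_n) (P : {poly F}) :
  y *m (Vandermonde t (\row_j a j))^T = 0 -> (size P <= t)%N ->
  \sum_j y 0 j * P.[a j] = 0.
Proof.
move=> y0 szP.
have moment0 (m : 'I_t) : \sum_j y 0 j * a j ^+ m = 0.
  transitivity ((y *m (Vandermonde t (\row_j a j))^T) 0 m); last by rewrite y0 mxE.
  by rewrite !mxE; apply: eq_bigr => j _; rewrite !mxE.
under eq_bigr => j _ do rewrite (horner_coef_wide _ szP) mulr_sumr.
rewrite exchange_big big1 //= => m _.
by under eq_bigr => j _ do rewrite mulrCA; rewrite -mulr_sumr moment0 mulr0.
Qed.

(* A nonzero y of weight at most t would be killed by the product of X - a j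
   over its support minus one point j0, a polynomial of size at most t. *)
Lemma min_dist_dual_Vandermonde t :
  min_dist_ge (kermx (Vandermonde t (\row_j a j))^T) t.+1.
Proof.
move=> y /sub_kermxP y0 y_neq0; rewrite ltnNge; apply/negP => wt_le.
set S := [set j | y 0 j != 0].
have /set0Pn[j0 j0S] : S != set0 by rewrite -cards_eq0 -/(wt y) wt_eq0.
pose P := \prod_(j <- enum (S :\ j0)) ('X - (a j)%:P).
have szP : (size P <= t)%N.
  have := cardsD1 j0 S; rewrite j0S size_prod_XsubC -cardE -/(wt y); lia.
have := dual_Vandermonde_horner y0 szP; rewrite (bigD1 j0) //= big1 ?addr0.
  apply/eqP; apply: mulf_neq0; first by rewrite inE in j0S.
  rewrite /P horner_prod prodf_seq_neq0; apply/allP => j; rewrite mem_enum !inE.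
  by case/andP=> jj0 _; rewrite hornerXsubC subr_eq0; apply: contra_neq jj0 => /a_inj.
move=> j jj0; have [-> | yj] := eqVneq (y 0 j) 0; first by rewrite mul0r.
rewrite /P horner_prod (bigD1_seq j) ?enum_uniq ?mem_enum ?inE ?jj0 ?yj //=.
by rewrite hornerXsubC subrr mul0r mulr0.
Qed.

End ReedSolomon.

Section MatrixProductCode.
Variables (F : fieldType) (k1 k2 m : nat) (G1 : 'M[F]_(k1, m)) (G2 : 'M[F]_(k2, m)).
Variables l l' : F.
Local Notation G := (block_mx G1 (l *: G1) G2 (l' *: G2)).

Lemma in_code_mp2 u : in_code G u ->
  exists x y, [/\ in_code G1 x, in_code G2 y & u = row_mx (x + y) (l *: x + l' *: y)].
Proof.
case/submxP=> D ->; exists (lsubmx D *m G1), (rsubmx D *m G2).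
rewrite /in_code !submxMl; split=> //.
by rewrite -{1}(hsubmxK D) mul_row_block !scalemxAr.
Qed.

Lemma row_free_mp2_factor : l != l' ->
  row_free (block_mx 1%:M l%:M 1%:M l'%:M : 'M[F]_(m + m)).
Proof.
move=> ll'; apply/inj_row_free => v.
rewrite -(hsubmxK v) mul_row_block !mulmx1 !mul_mx_scalar -row_mx0 => /eq_row_mx[v1 v2].
have vN : rsubmx v = - lsubmx v by apply/eqP; rewrite -addr_eq0 addrC v1.
move: v2; rewrite vN scalerN -scaleNr -scalerDl => /eqP; rewrite scaler_eq0.
case/orP => [|/eqP ->]; last by rewrite oppr0 row_mx0.
by rewrite subr_eq0 (negPf ll').
Qed.

Lemma rank_mp2 : l != l' -> \rank G = (\rank G1 + \rank G2)%N.
Proof.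
move=> ll'; have -> : G = block_mx G1 0 0 G2 *m block_mx 1%:M l%:M 1%:M l'%:M.
  by rewrite mulmx_block !mulmx1 !mul0mx !mul_mx_scalar !addr0 !add0r.
by rewrite mxrankMfree ?row_free_mp2_factor // rank_diag_block_mx.
Qed.

Lemma min_dist_mp2 d1 d2 : l != 0 -> l != l' ->
  min_dist_ge G1 d1 -> min_dist_ge G2 d2 -> min_dist_ge G (minn (2 * d1) d2).
Proof.
move=> l0 ll' dist1 dist2 u /in_code_mp2[x [y [x1 y2 ->]]] u0; rewrite wt_row_mx.
have [y0 | y_neq0] := eqVneq y 0.
  move: u0; rewrite y0 scaler0 !addr0 wtZ // => u0.
  have x0 : x != 0 by apply: contra_neq u0 => ->; rewrite scaler0 row_mx0.
  by rewrite addnn -mul2n (leq_trans (geq_minl _ _)) // leq_mul2l dist1.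
apply: leq_trans (geq_minr _ _) _.
exact: leq_trans (dist2 _ y2 y_neq0) (wt_le_mix _ _ ll').
Qed.

End MatrixProductCode.

Section Hermitian.
Variables (F : fieldType) (r : nat).
Local Notation conj := (fun x : F => x ^+ r).
Hypothesis conjD : {morph conj : x y / x + y}.
Hypothesis conjK : involutive conj.

Lemma conj0 : 0 ^+ r = 0 :> F.
Proof. by apply: (addrI (0 ^+ r)); rewrite -conjD !addr0. Qed.

Lemma conj_sum (I : Type) (s : seq I) (P : pred I) (f : I -> F) :
  (\sum_(i <- s | P i) f i) ^+ r = \sum_(i <- s | P i) f i ^+ r.
Proof. exact: (big_morph conj conjD conj0). Qed.

Lemma conj_eq0 (x : F) : (x ^+ r == 0) = (x == 0).
Proof. by apply/eqP/eqP => [x0 | ->]; rewrite ?conj0 // -[x]conjK /= x0 conj0. Qed.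

Lemma conj_horner (P : {poly F}) x : P.[x] ^+ r = (map_poly conj P).[x ^+ r].
Proof.
rewrite horner_coef conj_sum (@horner_coef_wide _ (size P)) ?size_poly //.
by apply: eq_bigr => i _; rewrite coef_map_id0 ?conj0 // exprMn exprAC.
Qed.

Lemma herm_ipC n (u v : 'rV[F]_n) : herm_ip r v u = herm_ip r u v ^+ r.
Proof.
rewrite /herm_ip conj_sum; apply: eq_bigr => j _.
by rewrite exprMn conjK mulrC.
Qed.

Lemma herm_ipDl n (u v w : 'rV[F]_n) :
  herm_ip r (u + v) w = herm_ip r u w + herm_ip r v w.
Proof. by rewrite /herm_ip -big_split; apply: eq_bigr => j _; rewrite mxE mulrDl. Qed.

Lemma herm_ipDr n (u v w : 'rV[F]_n) :
  herm_ip r u (v + w) = herm_ip r u v + herm_ip r u w.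
Proof. by rewrite /herm_ip -big_split; apply: eq_bigr => j _; rewrite mxE conjD mulrDr. Qed.

Lemma herm_ipZl n c (u v : 'rV[F]_n) : herm_ip r (c *: u) v = c * herm_ip r u v.
Proof. by rewrite /herm_ip mulr_sumr; apply: eq_bigr => j _; rewrite mxE mulrA. Qed.

Lemma herm_ipZr n c (u v : 'rV[F]_n) : herm_ip r u (c *: v) = c ^+ r * herm_ip r u v.
Proof. by rewrite /herm_ip mulr_sumr; apply: eq_bigr => j _; rewrite mxE exprMn mulrCA. Qed.

Lemma herm_ip_row_mx n1 n2 (u u' : 'rV[F]_n1) (v v' : 'rV[F]_n2) :
  herm_ip r (row_mx u v) (row_mx u' v') = herm_ip r u u' + herm_ip r v v'.
Proof.
rewrite /herm_ip big_split_ord /=; congr (_ + _); apply: eq_bigr => j _.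
  by rewrite (row_mxEl u v) (row_mxEl u' v').
by rewrite (row_mxEr u v) (row_mxEr u' v').
Qed.

Lemma herm_ip_Vandermonde_dual n (a : 'I_n -> F) k t (c : 'rV[F]_k) (y : 'rV[F]_n) :
  (k <= t)%N -> y *m (Vandermonde t (\row_j a j ^+ r))^T = 0 ->
  herm_ip r (c *m Vandermonde k (\row_j a j)) y = 0.
Proof.
move=> kt y0; apply/eqP; rewrite -conj_eq0 -herm_ipC; apply/eqP.
rewrite /herm_ip mul_Vandermonde.
under eq_bigr => j _ do rewrite mxE conj_horner.
apply: (dual_Vandermonde_horner y0).
by rewrite (leq_trans (size_poly _ _)) // (leq_trans (size_rVpoly c)).
Qed.

Lemma herm_self_orth_mp2 k1 k2 m (G1 : 'M[F]_(k1, m)) (G2 : 'M[F]_(k2, m)) (l l' : F) :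
  l * l ^+ r = -1 -> l' * l' ^+ r = -1 ->
  (forall x y, in_code G1 x -> in_code G2 y -> herm_ip r x y = 0) ->
  herm_self_orth r (block_mx G1 (l *: G1) G2 (l' *: G2)).
Proof.
move=> norm_l norm_l' orth u v /in_code_mp2[x [y [x1 y2 ->]]].
move=> /in_code_mp2[x' [y' [x1' y2' ->]]].
have xy' := orth _ _ x1 y2'; have yx' : herm_ip r y x' = 0.
  by rewrite herm_ipC orth // conj0.
rewrite herm_ip_row_mx !herm_ipDl !herm_ipDr !herm_ipZl !herm_ipZr xy' yx'.
rewrite !mulr0 !mulrA norm_l norm_l'; ring.
Qed.

End Hermitian.

Lemma sum_ord2 (f : 'I_2 -> nat) : (\sum_(i < 2) f i = f ord0 + f ord_max)%N.
Proof. by rewrite big_ord_recr big_ord1; congr (f _ + _)%N; apply: val_inj. Qed.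

Lemma ord2P (i : 'I_2) : i = ord0 \/ i = ord_max.
Proof. by case: i => [[|[|//]] hi]; [left | right]; apply: val_inj. Qed.

Section BlockMatrix2.
Import tagnat.

Lemma cast_Rank_ord0 (p_ : 'I_2 -> nat) (e : (\sum_i p_ i = p_ ord0 + p_ ord_max)%N)
    (u : 'I_(p_ ord0)) :
  cast_ord e (Rank _ u) = lshift _ u.
Proof. by apply: ord_inj; rewrite -[LHS]/(nat_of_ord (Rank _ u)) RankEsum big_pred0. Qed.

Lemma cast_Rank_ord_max (p_ : 'I_2 -> nat) (e : (\sum_i p_ i = p_ ord0 + p_ ord_max)%N)
    (u : 'I_(p_ ord_max)) :
  cast_ord e (Rank _ u) = rshift _ u.
Proof.
apply: ord_inj; rewrite -[LHS]/(nat_of_ord (Rank _ u)) RankEsum (big_pred1 ord0) //.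
by case=> [[|[|]]].
Qed.

Lemma mxblock_ord2 (T : Type) (p_ q_ : 'I_2 -> nat) (B_ : forall i j, 'M[T]_(p_ i, q_ j)) :
  \mxblock_(i < 2, j < 2) B_ i j = castmx (esym (sum_ord2 p_), esym (sum_ord2 q_))
    (block_mx (B_ ord0 ord0) (B_ ord0 ord_max) (B_ ord_max ord0) (B_ ord_max ord_max)).
Proof.
apply/mxblockP => i j; rewrite mxblockK.
have [->|->] := ord2P i; have [->|->] := ord2P j;
  apply/matrixP => u v; rewrite !mxE castmxE.
all: rewrite ?cast_Rank_ord0 ?cast_Rank_ord_max.
all: by rewrite ?block_mxEul ?block_mxEur ?block_mxEdl ?block_mxEdr.
Qed.

End BlockMatrix2.

Section CastCode.
Variables (F : fieldType) (k n k' n' : nat) (e : (k = k') * (n = n')) (G : 'M[F]_(k, n)).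

Lemma code_dim_castmx : code_dim (castmx e G) = code_dim G.
Proof. by case: e => ek en; case: k' / ek; case: n' / en; rewrite castmx_id. Qed.

Lemma herm_self_orth_castmx r : herm_self_orth r G -> herm_self_orth r (castmx e G).
Proof. by case: e => ek en; case: k' / ek; case: n' / en; rewrite castmx_id. Qed.

Lemma min_dist_castmx d : min_dist_ge G d -> min_dist_ge (castmx e G) d.
Proof. by case: e => ek en; case: k' / ek; case: n' / en; rewrite castmx_id. Qed.

End CastCode.

Lemma norm_neg1_neq0 (R : nzRingType) r (l : R) : l * l ^+ r = -1 -> l != 0.
Proof. by apply: contra_eq_neq => ->; rewrite mul0r eq_sym oppr_eq0 oner_eq0. Qed.

Lemma prim_expr_neq1 (R : idomainType) N (z : R) m :
  N.-primitive_root z -> (0 < m)%N -> (m < N)%N -> z ^+ m != 1.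
Proof.
move=> zN m0 mN; rewrite -(prim_order_dvd zN).
by apply: contraTN mN => /(dvdn_leq m0); rewrite -leqNgt.
Qed.

Lemma finField_prim_root (F : finFieldType) : exists z : F, (#|F|.-1).-primitive_root z.
Proof.
set units := enum [pred x : F | x != 0].
have size_units : size units = #|F|.-1.
  by rewrite -cardE -(cardC1 (0 : F)); apply: eq_card => x; rewrite !inE.
have F_gt1 : (1 < #|F|)%N := finNzRing_gt1 F.
have /hasP[z _ zN] : has (#|F|.-1).-primitive_root units.
  apply: has_prim_root; rewrite ?size_units ?enum_uniq //; first lia.
  apply/allP => x; rewrite mem_enum inE => x0; rewrite unity_rootE.
  have := expf_card x; rewrite -(ltn_predK F_gt1) exprSr => xq.
  by apply/eqP; apply: (mulIf x0); rewrite mul1r.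
by exists z.
Qed.

Section SquareOrderField.
Variables (F : finFieldType) (p e : nat).
Hypothesis p_prime : prime p.
Hypothesis e_gt0 : (0 < e)%N.
Local Notation r := (p ^ e)%N.
Hypothesis cardF : #|F| = (r ^ 2)%N.

Lemma sqrt_card_gt1 : (1 < r)%N.
Proof. by rewrite -{1}(expn0 p) ltn_exp2l ?prime_gt1. Qed.

Lemma card_units_sqr : (#|F|.-1 = r.-1 * r.+1)%N.
Proof. by rewrite cardF; have := sqrt_card_gt1; nia. Qed.

Lemma pchar_sqr_order : p \in [pchar F].
Proof. by apply: (card_finPcharP (n := (e * 2)%N)); rewrite // cardF expnM. Qed.

Lemma conj_sqr_orderD : {morph (fun x : F => x ^+ r) : x y / x + y}.
Proof.
by move=> x y; apply: exprDn_pchar; rewrite pnatX (pnatE _ p_prime) pchar_sqr_order.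
Qed.

Lemma conj_sqr_orderK : involutive (fun x : F => x ^+ r).
Proof. by move=> x; rewrite /= -exprM mulnn -cardF expf_card. Qed.

Lemma exists_norm1_neq1 : exists2 z : F, z * z ^+ r = 1 & z != 1.
Proof.
have [w wN] := finField_prim_root F; have r_gt1 := sqrt_card_gt1.
exists (w ^+ r.-1).
  by rewrite -exprS -exprM -card_units_sqr prim_expr_order.
by apply: (prim_expr_neq1 wN); rewrite ?card_units_sqr; nia.
Qed.

(* In odd characteristic, w ^+ (r./2 * r.+1) is a square root of 1 other than 1. *)
Lemma exists_norm_neg1 : exists l : F, l * l ^+ r = -1.
Proof.
have [p2 | p_odd] := even_prime p_prime.
  exists 1; rewrite expr1n mulr1; apply/eqP; rewrite -addr_eq0 -mulr2n.
  by have := pchar_sqr_order; rewrite p2 => /andP[].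
have r_odd : odd r by rewrite oddX p_odd orbT.
have r_half : r = (r./2).*2.+1 by rewrite -[LHS](odd_double_half r) r_odd.
have [w wN] := finField_prim_root F; have r_gt1 := sqrt_card_gt1.
exists (w ^+ r./2); rewrite -exprS -exprM.
have order_w : (r./2 * r.+1 * 2 = #|F|.-1)%N by rewrite card_units_sqr; lia.
have : (w ^+ (r./2 * r.+1)) ^+ 2 == 1 by rewrite -exprM order_w prim_expr_order.
have t_neq1 : w ^+ (r./2 * r.+1) != 1.
  by apply: (prim_expr_neq1 wN); rewrite ?card_units_sqr; nia.
by rewrite sqrf_eq1 (negPf t_neq1) => /eqP.
Qed.

Lemma two_norm_neg1 :
  exists l l' : F, [/\ l * l ^+ r = -1, l' * l' ^+ r = -1 & l != l'].
Proof.
have [l norm_l] := exists_norm_neg1; have [z norm_z z1] := exists_norm1_neq1.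
have l0 := norm_neg1_neq0 norm_l.
exists l, (l * z); split=> //; first by rewrite exprMn mulrACA norm_l norm_z mulr1.
by apply: contra_neq z1 => lz; apply: (mulfI l0); rewrite -lz mulr1.
Qed.

End SquareOrderField.

Lemma exists_inj_ord (T : finType) n : (n <= #|T|)%N -> exists a : 'I_n -> T, injective a.
Proof.
move=> nT; exists (fun j => enum_val (widen_ord nT j)).
by move=> j j' /enum_val_inj/(congr1 val) /= jj'; apply: val_inj.
Qed.

Theorem corollary5p2 (F : finFieldType) (r : nat)
  (hr : exists p e : nat, [/\ prime p, (0 < e)%N & r = (p ^ e)%N])
  (hq : #|F| = (r ^ 2)%N)
  (n k : nat) (hkn : (k <= n)%N) (hnq : (n <= r ^ 2)%N)
  (i : nat) (hi : (i <= n - k)%N) :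
  exists (s l m : nat) (kk : 'I_s -> nat) (G : forall j : 'I_s, 'M[F]_(kk j, m))
         (A : 'M[F]_(s, l)),
    [/\ (\sum_(j < l) m)%N = (2 * n)%N,
        herm_self_orth r (mp_gen G A),
        code_dim (mp_gen G A) = (n - i)%N
      & min_dist_ge (mp_gen G A) (minn (2 * (n - k + 1)) (k + i + 1))].
Proof.
have [p [e [p_prime e_gt0 rE]]] := hr; subst r.
have conjD := conj_sqr_orderD p_prime hq; have conjK := conj_sqr_orderK hq.
have [l [l' [norm_l norm_l' ll']]] := two_norm_neg1 p_prime e_gt0 hq.
have l0 := norm_neg1_neq0 norm_l.
rewrite -hq in hnq; have [a a_inj] := exists_inj_ord hnq.
have b_inj : injective (fun j => a j ^+ (p ^ e)) by move=> j j' /(can_inj conjK)/a_inj.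
have tn : (k + i <= n)%N by lia.
pose C1 := Vandermonde k (\row_j a j).
pose C2 := kermx (Vandermonde (k + i) (\row_j a j ^+ (p ^ e)))^T.
pose kk (j : 'I_2) := if j == ord0 then k else n.
pose G j : 'M_(kk j, n) := if j == ord0 as b return 'M_(if b then k else n, n) then C1 else C2.
pose A := \matrix_(i0 < 2, j < 2) (if j == ord0 then 1 else if i0 == ord0 then l else l').
exists 2%N, 2%N, n, kk, G, A.
rewrite /mp_gen mxblock_ord2 !mxE /= !scale1r.
split.
- by rewrite sum_ord2 mul2n addnn.
- apply/herm_self_orth_castmx/herm_self_orth_mp2 => // x y /submxP[c ->] /sub_kermxP.
  exact: herm_ip_Vandermonde_dual (leq_addr _ _).
- rewrite code_dim_castmx /code_dim rank_mp2 // mxrank_ker mxrank_tr.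
  rewrite (eqP (row_free_Vandermonde a_inj hkn)) (eqP (row_free_Vandermonde b_inj tn)).
  change (k + (n - (k + i)) = n - i)%N; lia.
- apply: min_dist_castmx; apply: min_dist_mp2 => //.
    change (min_dist_ge C1 (n - k + 1)).
    by rewrite addn1 -subSn //; apply: min_dist_Vandermonde.
  change (min_dist_ge C2 (k + i + 1)).
  by rewrite addn1; apply: min_dist_dual_Vandermonde.
Qed.
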